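(* Consider the dynamic panel logit AR(1) model with $T=3$: binary outcomes $Y_0,Y_1,Y_2,Y_3\in\{0,1\}$, regressors $X=(X_1,X_2,X_3)\in\mathbb{R}^{K\times 3}$ and a scalar fixed effect $A\in\mathbb{R}$ such that, for $t\in\{1,2,3\}$, $$\Pr(Y_t=1\mid Y_0,\dots,Y_{t-1},X,A)=\frac{\exp(X_t'\beta_0+Y_{t-1}\gamma_0+A)}{1+\exp(X_t'\beta_0+Y_{t-1}\gamma_0+A)},$$ with true parameters $\beta_0\in\mathbb{R}^K$, $\gamma_0\in\mathbb{R}$. Write $x_{ts}=x_t-x_s$ and $y=(y_1,y_2,y_3)$. Define $$m_0^{(a)}(y,x,\beta,\gamma)=\begin{cases}\exp(x_{12}'\beta)&y=(0,1,0),\\ \exp(x_{13}'\beta-\gamma)&y=(0,1,1),\\ -1&(y_1,y_2)=(1,0),\\ \exp(x_{32}'\beta)-1&y=(1,1,0),\\0&\text{otherwise},\end{cases}\qquad m_0^{(b)}(y,x,\beta,\gamma)=\begin{cases}\exp(x_{23}'\beta)-1&y=(0,0,1),\\ -1&(y_1,y_2)=(0,1),\\ \exp(x_{31}'\beta)&y=(1,0,0),\\ \exp(\gamma+x_{21}'\beta)&y=(1,0,1),\\0&\text{otherwise},\end{cases}$$ $$m_1^{(a)}(y,x,\beta,\gamma)=\begin{cases}\exp(x_{12}'\beta+\gamma)&y=(0,1,0),\\ \exp(x_{13}'\beta)&y=(0,1,1),\\ -1&(y_1,y_2)=(1,0),\\ \exp(x_{32}'\beta)-1&y=(1,1,0),\\0&\text{otherwise},\end{cases}\qquad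 m_1^{(b)}(y,x,\beta,\gamma)=\begin{cases}\exp(x_{23}'\beta)-1&y=(0,0,1),\\ -1&(y_1,y_2)=(0,1),\\ \exp(x_{31}'\beta-\gamma)&y=(1,0,0),\\ \exp(x_{21}'\beta)&y=(1,0,1),\\0&\text{otherwise}.\end{cases}$$ Then for all $y_0\in\{0,1\}$, $x\in\mathbb{R}^{K\times 3}$ and $\alpha\in\mathbb{R}$, $$\mathbb{E}\big[m^{(a)}_{y_0}(Y,X,\beta_0,\gamma_0)\mid Y_0=y_0,X=x,A=\alpha\big]=0,\qquad \mathbb{E}\big[m^{(b)}_{y_0}(Y,X,\beta_0,\gamma_0)\mid Y_0=y_0,X=x,A=\alpha\big]=0,$$ where $Y=(Y_1,Y_2,Y_3)$.
   Context: The joint distribution of $(X,A)$ (and of $Y_0$) is unrestricted; only the conditional law of $(Y_1,Y_2,Y_3)$ given $(Y_0,X,A)$ is specified by the logit model above. The conditional expectation is thus $\sum_{y\in\{0,1\}^3}\prod_{t=1}^3\frac{1}{1+\exp[(1-2y_t)(x_t'\beta_0+y_{t-1}\gamma_0+\alpha)]}\,m_{y_0}(y,x,\beta_0,\gamma_0)$. *)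

From mathcomp Require Import all_boot all_order all_algebra.
From mathcomp Require Import reals. From mathcomp Require Import sequences exp.
Set Implicit Arguments. Unset Strict Implicit. Unset Printing Implicit Defensive.
Import Order.TTheory GRing.Theory Num.Theory.
Local Open Scope ring_scope.

Section Defs.
Variables (R : realType) (K : nat).

(* Periods t = 1,2,3 are the columns 0,1,2 of x : R^{K x 3}. *)
Definition per1 : 'I_3 := @Ordinal 3 0 erefl.
Definition per2 : 'I_3 := @Ordinal 3 1 erefl.
Definition per3 : 'I_3 := @Ordinal 3 2 erefl.

Definition xb (x : 'M[R]_(K, 3)) (beta : 'cV[R]_K) (t : 'I_3) : R :=
  \sum_(k < K) x k t * beta k 0.

Definition xdb (x : 'M[R]_(K, 3)) (beta : 'cV[R]_K) (t s : 'I_3) : R :=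
  \sum_(k < K) (x k t - x k s) * beta k 0.

Definition b2R (b : bool) : R := (b : nat)%:R.

(* 1 / (1 + exp((1 - 2 y_t) z)) : conditional probability of outcome y_t
   given index z = x_t' beta + y_{t-1} gamma + alpha. *)
Definition logitp (yt : bool) (z : R) : R :=
  1 / (1 + expR ((1 - 2 * b2R yt) * z)).

Definition pathprob (x : 'M[R]_(K, 3)) (beta : 'cV[R]_K) (gamma alpha : R)
  (y0 y1 y2 y3 : bool) : R :=
  logitp y1 (xb x beta per1 + b2R y0 * gamma + alpha) *
  logitp y2 (xb x beta per2 + b2R y1 * gamma + alpha) *
  logitp y3 (xb x beta per3 + b2R y2 * gamma + alpha).

Definition m0a (y1 y2 y3 : bool) (x : 'M[R]_(K, 3)) (beta : 'cV[R]_K) (gamma : R) : R :=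
  match y1, y2, y3 with
  | false, true, false => expR (xdb x beta per1 per2)
  | false, true, true => expR (xdb x beta per1 per3 - gamma)
  | true, false, _ => -1
  | true, true, false => expR (xdb x beta per3 per2) - 1
  | _, _, _ => 0
  end.

Definition m0b (y1 y2 y3 : bool) (x : 'M[R]_(K, 3)) (beta : 'cV[R]_K) (gamma : R) : R :=
  match y1, y2, y3 with
  | false, false, true => expR (xdb x beta per2 per3) - 1
  | false, true, _ => -1
  | true, false, false => expR (xdb x beta per3 per1)
  | true, false, true => expR (gamma + xdb x beta per2 per1)
  | _, _, _ => 0
  end.

Definition m1a (y1 y2 y3 : bool) (x : 'M[R]_(K, 3)) (beta : 'cV[R]_K) (gamma : R) : R :=
  match y1, y2, y3 with
  | false, true, false => expR (xdb x beta per1 per2 + gamma)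
  | false, true, true => expR (xdb x beta per1 per3)
  | true, false, _ => -1
  | true, true, false => expR (xdb x beta per3 per2) - 1
  | _, _, _ => 0
  end.

Definition m1b (y1 y2 y3 : bool) (x : 'M[R]_(K, 3)) (beta : 'cV[R]_K) (gamma : R) : R :=
  match y1, y2, y3 with
  | false, false, true => expR (xdb x beta per2 per3) - 1
  | false, true, _ => -1
  | true, false, false => expR (xdb x beta per3 per1 - gamma)
  | true, false, true => expR (xdb x beta per2 per1)
  | _, _, _ => 0
  end.

Definition ma (y0 : bool) := if y0 then m1a else m0a.
Definition mb (y0 : bool) := if y0 then m1b else m0b.

Definition condexp (x : 'M[R]_(K, 3)) (beta : 'cV[R]_K) (gamma alpha : R)
  (y0 : bool) (f : bool -> bool -> bool -> R) : R :=
  \sum_(y1 : bool) \sum_(y2 : bool) \sum_(y3 : bool)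
     pathprob x beta gamma alpha y0 y1 y2 y3 * f y1 y2 y3.

End Defs.

From mathcomp Require Import all_boot all_order all_algebra.
From mathcomp Require Import reals. From mathcomp Require Import sequences exp.
From mathcomp Require Import ring.
Import Order.TTheory GRing.Theory Num.Theory.
Local Open Scope ring_scope.

(* Writing [u_t = exp(x_t' beta + alpha)] and [g = exp gamma], every path
   probability is a product of factors [w^y / (1 + w)] whose odds [w] are
   [u_t g^(y_{t-1})], and every value of the moment functions is a ratio
   [u_t / u_s] possibly multiplied by [g] or [1/g].  Each conditional
   expectation is then a rational function of [u_1, u_2, u_3, g]; for
   [m_0^(a)], say, it equals [u_1 / (1 + u_1)] times
     [1/(1 + u_3 g) - 1/(1 + u_2 g) + g (u_3 - u_2) / ((1 + u_2 g)(1 + u_3 g))],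
   which vanishes identically. *)

Definition odds_prob {F : fieldType} (y : bool) (w : F) : F :=
  (if y then w else 1) / (1 + w).

Lemma odds_denom_neq0 {F : numFieldType} (w : F) : 0 < w -> 1 + w != 0.
Proof. by move=> w_gt0; rewrite gt_eqF // addr_gt0. Qed.

Lemma logitpE (R : realType) (y : bool) (z : R) :
  logitp y z = odds_prob y (expR z).
Proof.
rewrite /logitp /odds_prob /b2R; case: y => /=; rewrite ?mulr0n ?mulr1n.
  have ez_gt0 := expR_gt0 z.
  rewrite mulr1 (_ : 1 - 2 = -1) ?mulN1r ?expRN; last by ring.
  by field; rewrite odds_denom_neq0 ?gt_eqF.
by rewrite mulr0 subr0 !mul1r.
Qed.

Lemma xdbE (R : realType) (K : nat) (x : 'M[R]_(K, 3)) (beta : 'cV[R]_K) t s :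
  xdb x beta t s = xb x beta t - xb x beta s.
Proof. by rewrite /xdb /xb -sumrB; apply: eq_bigr => k _; rewrite mulrBl. Qed.

Section LogitOdds.
Variables (R : realType) (K : nat) (x : 'M[R]_(K, 3)) (beta : 'cV[R]_K).
Variables (gamma alpha : R).

Let u t := expR (xb x beta t + alpha).
Let g := expR gamma.

Lemma pathprob_odds y0 y1 y2 y3 :
  pathprob x beta gamma alpha y0 y1 y2 y3 =
  odds_prob y1 (u per1 * g ^+ y0) * odds_prob y2 (u per2 * g ^+ y1) *
  odds_prob y3 (u per3 * g ^+ y2).
Proof.
have expR_index t (y : bool) :
    expR (xb x beta t + b2R R y * gamma + alpha) = u t * g ^+ y.
  rewrite /u /g addrAC (expRD (_ + alpha)) /b2R.
  by case: y; rewrite /= ?mulr1n ?mulr0n ?mul1r ?mul0r ?expR0 ?expr1 ?expr0.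
by rewrite /pathprob !logitpE !expR_index.
Qed.

Lemma expR_xdb t s : expR (xdb x beta t s) = u t / u s.
Proof.
by rewrite /u -expRB xdbE; congr expR; rewrite opprD addrACA subrr addr0.
Qed.

Local Ltac moment_identity m :=
  rewrite /condexp !big_bool /= !pathprob_odds /m ?expRB ?expRD !expR_xdb;
  rewrite /odds_prob /u /g /= ?expr0 ?expr1 ?mulr1;
  by field; rewrite !expR_eq0 !odds_denom_neq0 ?mulr_gt0 ?expR_gt0.

Lemma condexp_m0a :
  condexp x beta gamma alpha false (fun y1 y2 y3 => m0a y1 y2 y3 x beta gamma) = 0.
Proof. moment_identity m0a. Qed.

Lemma condexp_m0b :
  condexp x beta gamma alpha false (fun y1 y2 y3 => m0b y1 y2 y3 x beta gamma) = 0.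
Proof. moment_identity m0b. Qed.

Lemma condexp_m1a :
  condexp x beta gamma alpha true (fun y1 y2 y3 => m1a y1 y2 y3 x beta gamma) = 0.
Proof. moment_identity m1a. Qed.

Lemma condexp_m1b :
  condexp x beta gamma alpha true (fun y1 y2 y3 => m1b y1 y2 y3 x beta gamma) = 0.
Proof. moment_identity m1b. Qed.

End LogitOdds.

Theorem lemma1 (R : realType) (K : nat) (beta0 : 'cV[R]_K) (gamma0 : R)
  (y0 : bool) (x : 'M[R]_(K, 3)) (alpha : R) :
  condexp x beta0 gamma0 alpha y0 (fun y1 y2 y3 => ma y0 y1 y2 y3 x beta0 gamma0) = 0 /\
  condexp x beta0 gamma0 alpha y0 (fun y1 y2 y3 => mb y0 y1 y2 y3 x beta0 gamma0) = 0.
Proof.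
case: y0; split.
- exact: condexp_m1a.
- exact: condexp_m1b.
- exact: condexp_m0a.
- exact: condexp_m0b.
Qed.
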